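(* Let $G$ be a finite group and $p$ a prime such that the Sylow $p$-subgroups of $G$ are cyclic of order $p^r$, and let $\mathbf 1_G$ be the trivial $\mathbb{Z}_p[G]$-lattice. If $r\ge1$, then $$v_p(C_{\theta_G}(\mathbf 1_G))=-r\Big(1-\frac{|Z_G(Q)|}{|N_G(Q)|}\Big)$$ for any non-trivial $p$-subgroup $Q$ of $G$. If $r=0$ (i.e.\ $p\nmid|G|$), then $v_p(C_{\theta_G}(\mathbf 1_G))=0$.
   Context: Artin relation: $\theta_G=[G]-\sum_H\alpha_H[H]$, where $H$ runs over representatives of conjugacy classes of cyclic subgroups, $[H]$ stands for the $G$-set $G/H$, and the $\alpha_H\in\mathbb{Q}$ are uniquely determined by $[\mathbf 1]=\sum_H\alpha_H[\mathbb{Q}[G/H]]$ in $A(\mathbb{Q}[G])$ (Artin induction). For a rational Brauer relation $\theta=\sum_K\beta_K[K]$, one has $v_p(C_\theta(\mathbf 1_G))=-\sum_K\beta_K v_p(|K|)$. This is the regulator constant $\prod_i\det(\tfrac1{|H_i|}\langle\ ,\ \rangle|_{M^{H_i}})/\prod_j\det(\tfrac1{|H'_j|}\langle\ ,\ \rangle|_{M^{H'_j}})$ at $M=\mathbb{Z}_p$ with $\langle x,y\rangle=xy$, extended linearly. $Z_G$ and $N_G$ denote the centraliser and normaliser. *)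

From HB Require Import structures.
From mathcomp Require Import all_boot all_order all_algebra all_fingroup all_solvable all_field all_character.
Set Implicit Arguments. Unset Strict Implicit. Unset Printing Implicit Defensive.
Import GRing.Theory Num.Theory.
Local Open Scope ring_scope.

(* p-adic valuation of a rational number (v_p(0) = 0 by convention). *)
Definition vp_rat (p : nat) (q : rat) : int :=
  (logn p `|numq q|%N)%:Z - (logn p `|denq q|%N)%:Z.

(* Determinant of the form (1/|H|) <x,y> = xy/|H| on M^H = Z_p for the
   trivial lattice M = 1_G = Z_p (basis {1}): a 1x1 Gram matrix [1/|H|]. *)
Definition reg_det_trivial (gT : finGroupType) (H : {group gT}) : rat :=
  (#|H|%:R)^-1.

(* A rational Brauer relation theta = sum_K beta_K [G/K], encoded as a list
   of pairs (beta_K, K).  The valuation v_p of the regulator constant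
   C_theta(1_G), extended linearly in the coefficients:
     v_p(C_theta(1_G)) = sum_K beta_K v_p(det(1/|K| <,> on M^K)). *)
Definition vp_regconst_trivial (gT : finGroupType) (p : nat)
    (theta : seq (rat * {group gT})) : rat :=
  \sum_(kc <- theta) kc.1 * (vp_rat p (reg_det_trivial kc.2))%:~R.

Definition cyclic_class_reps (gT : finGroupType) (G : {group gT})
    (reps : seq {group gT}) : Prop :=
  (forall K : {group gT}, K \in reps -> (K \subset G) && cyclic K) /\
  (forall H : {group gT}, H \subset G -> cyclic H ->
     count (fun K : {group gT} => (H : {set gT}) \in (K :^: G)%g) reps = 1%N).

(* The Artin coefficients: [1] = sum_H alpha_H [Q[G/H]] in A(Q[G]) (tensor Q),
   expressed via characters (the character map on A(Q[G]) is injective):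
   the permutation character of G/H is 'Ind[G,H] 1. *)
Definition artin_coeffs (gT : finGroupType) (G : {group gT})
    (reps : seq {group gT}) (alpha : {group gT} -> rat) : Prop :=
  (1 : 'CF(G)) = \sum_(H <- reps) (ratr (alpha H) : algC) *: 'Ind[G, H] (1 : 'CF(H)).

Definition artin_relation (gT : finGroupType) (G : {group gT})
    (reps : seq {group gT}) (alpha : {group gT} -> rat)
    : seq (rat * {group gT}) :=
  (1, G) :: [seq (- alpha H, H) | H <- reps].

From HB Require Import structures.
From mathcomp Require Import all_boot all_order all_algebra all_fingroup all_solvable all_field all_character.
From mathcomp Require Import ring.
Import GRing.Theory Num.Theory.

Set Implicit Arguments. Unset Strict Implicit. Unset Printing Implicit Defensive.

(* Put S = \sum_H alpha_H log_p |H|, so that v_p(C_theta(1_G)) = - r + S.  Evaluating the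
   Artin relation on the class function g |-> logn_weight p (log_p #[g]) gives
   \sum_(g in G) logn_weight p (log_p #[g]) = |G| S, because the weights are chosen so that this
   sum is |H| log_p |H| on every cyclic group H.  Counting instead the elements of G with a given
   p-part u, Burnside's transfer theorem in 'C_G[u] (whose Sylow subgroups are cyclic) evaluates
   the same sum as |G| r |C_G(P)| / |N_G(P)|.  Finally a Frattini argument shows that
   |C_G(Q)| / |N_G(Q)| = |C_G(P)| / |N_G(P)| for every non-trivial p-subgroup Q. *)

(* Burnside's normal p-complement theorem, through the transfer of C into P. *)
Section BurnsideTransfer.
Local Open Scope group_scope.
Import FiniteModule.
Variables (gT : finGroupType) (p : nat) (C P : {group gT}).
Hypotheses (sylP : p.-Sylow(C) P) (abP : abelian P) (nPC : 'N_C(P) \subset 'C(P)).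

Let sPC : P \subset C := pHall_sub sylP.

(* P and P :^ x are Sylow in 'C_C[h ^ x], hence x = n y with n in 'N_C(P) and y fixing h ^ x. *)
Lemma Sylow_conj_fixed h x : h \in P -> x \in C -> h ^ x \in P -> h ^ x = h.
Proof.
move=> Ph Cx Phx; have sCkC : 'C_C[h ^ x] \subset C by apply: subsetIl.
have sPCk : P \subset 'C_C[h ^ x] by rewrite subsetI sPC sub_cent1 (subsetP abP).
have sPxCk : P :^ x \subset 'C_C[h ^ x].
  by rewrite subsetI -(conjGid Cx) conjSg sPC cent1J conjSg sub_cent1 (subsetP abP).
have sylPx : p.-Sylow(C) (P :^ x)%G by rewrite pHallJ.
have [y /setIP[Cy /cent1P cyk] defPx] :=
  Sylow_trans (pHall_subl sPCk sCkC sylP) (pHall_subl sPxCk sCkC sylPx).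
have NCxy : x * y^-1 \in 'N_C(P).
  by rewrite inE groupM ?groupV //=; apply/normP; rewrite conjsgM /= defPx conjsgK.
have /centP cPxy := subsetP nPC _ NCxy.
have hxy : h ^ x = h ^ y.
  rewrite -{1}(mulgKV y x) conjgM; congr (_ ^ y).
  by rewrite conjgE -(cPxy h Ph) mulKg.
have kyV : (h ^ x) ^ y^-1 = h ^ x.
  by apply/conjg_fixP/commgP/commuteV/commute_sym.
by rewrite -[LHS]kyV hxy conjgK.
Qed.

Let idmP : idm P @* P = P. Proof. exact: morphim_idm. Qed.
Let abfP : abelian (idm P @* P). Proof. by rewrite idmP. Qed.
Let fPP g : g \in P -> g \in idm P @* P. Proof. by rewrite idmP. Qed.

Local Notation T := (transfer_morphism C abfP).

Lemma transfer_Sylow g : g \in P -> T g = (fmod abfP g *+ #|C : P|)%R.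
Proof.
move=> Pg; have Cg := subsetP sPC g Pg.
have trX := transversalP (rcosets_cycle_partition sPC Cg).
rewrite /= (transfer_cycle_expansion sPC abfP Cg trX).
rewrite -(sum_index_rcosets_cycle sPC Cg trX) -sumrMnr.
apply: eq_bigr => x Xx; have Cx : x \in C := subsetP (transversal_sub trX) x Xx.
set n := #|<[g]> : P :* x|.
have Pgnx : (g ^+ n) ^ x^-1 \in P.
  have := mulg_exp_card_rcosets P g x; rewrite -/n mem_rcoset.
  by rewrite conjgE invgK mulgA.
rewrite Sylow_conj_fixed ?groupX ?groupV //.
by change (fmod abfP (g ^+ n) = fmod abfP g *+ n)%R; rewrite fmodX ?fPP.
Qed.

Lemma Sylow_ker_transfer_TI : P :&: 'ker T = 1.
Proof.
apply/trivgP/subsetP => g /setIP[Pg /(mker (f := T))].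
rewrite transfer_Sylow // -fmodX ?fPP // => /(congr1 val).
rewrite fmodK ?fPP ?groupX // => /eqP; rewrite -order_dvdn => dvd_g_idx.
have cop : coprime #|P| #|C : P| by case/andP: (pHall_Hall sylP).
have : #[g] %| gcdn #|P| #|C : P| by rewrite dvdn_gcd order_dvdG.
by rewrite (eqP cop) dvdn1 order_eq1 inE.
Qed.

Lemma p'elt_ker_transfer s : s \in C -> p^'.-elt s -> s \in 'ker T.
Proof.
move=> Cs p's; apply/kerP => //; apply: val_inj; rewrite fmval0.
have /(mem_p_elt (pHall_pgroup sylP)) pTs : val (T s) \in P.
  by have := fmodP (T s); rewrite /= idmP.
have dvdTs : #[val (T s)] %| #[s].
  by apply: dvdn_trans (morph_order _ _) (morph_order _ _); rewrite ?inE.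
by apply/eqP; rewrite -order_eq1 -(pnat_1 pTs (pnat_dvd dvdTs p's)).
Qed.

Lemma ker_transfer_Sylow : 'ker T = [set s in C | p^'.-elt s].
Proof.
apply/setP => g; rewrite [RHS]inE; apply/idP/andP => [kg | [Cg p'g]]; last first.
  exact: p'elt_ker_transfer.
have Cg : g \in C := dom_ker kg.
split=> //; apply/constt1P; set u := g.`_p.
have ku : u \in 'ker T by rewrite groupX.
have sUC : <[u]> \subset C by rewrite cycle_subG (dom_ker ku).
have [y Cy sUPy] := Sylow_subJ sylP sUC (p_elt_constt p g).
have Puy : u ^ y^-1 \in P by rewrite -mem_conjg (subsetP sUPy) ?cycle_id.
have kuy : u ^ y^-1 \in 'ker T.
  by rewrite memJ_norm ?groupV ?(subsetP (ker_norm T)).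
have /trivgP/subsetP/(_ (u ^ y^-1)) := Sylow_ker_transfer_TI.
by rewrite inE Puy kuy inE conjg_eq1 => /(_ isT)/eqP.
Qed.

Lemma card_Sylow_transfer_image : #|T @* C| = #|P|.
Proof.
apply/eqP; rewrite eqn_leq; apply/andP; split.
  apply: leq_trans (subset_leq_card (subsetT _)) _.
  rewrite cardsT -(card_imset predT val_inj); apply: subset_leq_card.
  by apply/subsetP => _ /imsetP[u _ ->]; have := fmodP u; rewrite /= idmP.
apply: leq_trans (subset_leq_card (morphimS T sPC)).
by rewrite card_morphim (setIidPr sPC) -indexgI Sylow_ker_transfer_TI indexg1.
Qed.

Lemma card_p'elt_mul_Sylow : (#|[set s in C | p^'.-elt s]| * #|P|)%N = #|C|.
Proof.
rewrite -ker_transfer_Sylow -card_Sylow_transfer_image card_morphim setIid.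
by rewrite Lagrange //; apply/subsetP/dom_ker.
Qed.

End BurnsideTransfer.

Section CyclicSylow.
Local Open Scope group_scope.
Variables (gT : finGroupType) (p : nat).
Implicit Types (K P Q : {group gT}) (u x y : gT).

(* By coprime action [~: P, <[x]>] meets 'C(x) trivially; but if it were not trivial it would
   contain the subgroup of order p of P, which lies in <[u]> and so is centralised by x. *)
Lemma p'elt_cent_cyclic_pgroup P x u :
  p.-group P -> cyclic P -> x \in 'N(P) -> p^'.-elt x ->
  u \in P -> u != 1 -> commute x u -> x \in 'C(P).
Proof.
move=> pP cycP nPx p'x Pu ntu cxu.
have nPX : <[x]> \subset 'N(P) by rewrite cycle_subG.
have sRP : [~: P, <[x]>] \subset P by rewrite commg_subl.
have TIcent : 'C_[~: P, <[x]>](<[x]>) = 1.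
  apply: coprime_abel_cent_TI nPX _ (cyclic_abelian cycP).
  by rewrite -orderE (pnat_coprime pP).
have cXu : <[u]> \subset 'C(<[x]>).
  by rewrite cent_cycle cycle_subG; apply/cent1P; apply: commute_sym.
rewrite -sub_cent1 -cent_cycle; apply/commG1P/eqP.
rewrite -Ohm1_eq1 -subG1 -TIcent subsetI Ohm_sub /=.
have [-> | ntR] := eqVneq [~: P, <[x]>] 1; first by rewrite Ohm1 sub1G.
apply: subset_trans cXu.
have pU : p.-group <[u]> by rewrite (pgroupS _ pP) ?cycle_subG.
have [_ p_dv_u _] : [/\ prime p, p %| #|<[u]>| & exists m, #|<[u]>| = (p ^ m.+1)%N].
  by apply: pgroup_pdiv; rewrite ?cycle_eq1.
rewrite -(cardSg_cyclic cycP) ?cycle_subG ?(subset_trans (Ohm_sub 1 _)) //.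
by rewrite (Ohm1_cyclic_pgroup_prime (cyclicS sRP cycP) (pgroupS sRP pP) ntR).
Qed.

Lemma norm_cent_cyclic_Sylow K P y u : p.-Sylow(K) P -> cyclic P ->
  y \in 'N_K(P) -> u \in P -> u != 1 -> commute y u -> y \in 'C(P).
Proof.
move=> sylP cycP NKy Pu ntu cyu.
have NKyX z : z \in <[y]> -> z \in 'N_K(P) by case/cycleP=> i ->; rewrite groupX.
have sylPN : p.-Sylow('N_K(P)) P.
  by rewrite (pHall_subl _ _ sylP) ?subsetIl // subsetI (pHall_sub sylP) normG.
have nPN : P <| 'N_K(P) by rewrite normalSG ?(pHall_sub sylP).
rewrite -(consttC p y) groupM //; last first.
  have /setIP[_ nPyp'] := NKyX _ (cycle_constt p^' y).
  apply: p'elt_cent_cyclic_pgroup (pHall_pgroup sylP) cycP nPyp' _ Pu ntu _.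
    exact: p_elt_constt.
  by apply/commute_sym/commuteX/commute_sym.
rewrite (subsetP (cyclic_abelian cycP)) // (mem_normal_Hall sylPN nPN) ?p_elt_constt //.
exact/NKyX/cycle_constt.
Qed.

Lemma card_norm_cent_cyclic_Sylow_sub K P Q : p.-Sylow(K) P -> cyclic P ->
  Q \subset P -> Q :!=: 1 ->
  (#|'N_K(Q)| * #|'C_K(P)|)%N = (#|'N_K(P)| * #|'C_K(Q)|)%N.
Proof.
move=> sylP cycP sQP ntQ; have sPK := pHall_sub sylP.
have sPCQ : P \subset 'C_K(Q).
  by rewrite subsetI sPK centsC (subset_trans sQP (cyclic_abelian cycP)).
have sylPC : p.-Sylow('C_K(Q)) P := pHall_subl sPCQ (subsetIl _ _) sylP.
have frattini := Frattini_arg (subcent_normal K Q) sylPC.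
have NNKQP : 'N_('N_K(Q))(P) = 'N_K(P).
  apply/setP => z; rewrite !in_setI; apply/andP/andP => [[/andP[Kz _] Nz] | [Kz Nz]] //.
  split=> //; rewrite Kz /=; apply/normP/eqP.
  have sQzP : Q :^ z \subset P by rewrite -(normP Nz) conjSg.
  by rewrite (eq_subG_cyclic cycP) ?cardJg.
have CNKQP : 'C_K(Q) :&: 'N_K(P) = 'C_K(P).
  apply/setP => z; rewrite !in_setI; apply/idP/idP.
    case/andP=> /andP[Kz cQz] /andP[_ Nz]; rewrite Kz /=.
    have [u Qu ntu] := trivgPn _ ntQ.
    apply: (norm_cent_cyclic_Sylow sylP cycP _ (subsetP sQP u Qu) ntu).
      by rewrite inE Kz.
    exact: centP cQz u Qu.
  case/andP=> Kz cPz; rewrite Kz (subsetP (centS sQP)) //=.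
  by rewrite (subsetP (cent_sub P)).
have := mul_cardG 'C_K(Q) 'N_K(P).
by rewrite NNKQP in frattini; rewrite frattini CNKQP mulnC => ->.
Qed.

Lemma card_norm_cent_cyclic_Sylow K P Q : p.-Sylow(K) P -> cyclic P ->
  Q \subset K -> p.-group Q -> Q :!=: 1 ->
  (#|'N_K(Q)| * #|'C_K(P)|)%N = (#|'N_K(P)| * #|'C_K(Q)|)%N.
Proof.
move=> sylP cycP sQK pQ ntQ; have [x Kx sQPx] := Sylow_subJ sylP sQK pQ.
have sylPx : p.-Sylow(K) (P :^ x)%G by rewrite pHallJ.
have cardKJ A : #|K :&: A :^ x| = #|K :&: A|.
  by rewrite -{1}(conjGid Kx) -conjIg cardJg.
have cycPx : cyclic (P :^ x)%G by rewrite /= cyclicJ.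
have := card_norm_cent_cyclic_Sylow_sub sylPx cycPx sQPx ntQ.
by rewrite /= normJ centJ !cardKJ.
Qed.

Lemma card_p'elt_cent1_cyclic_Sylow K P u : p.-Sylow(K) P -> cyclic P ->
  u \in K -> p.-elt u -> u != 1 ->
  (#|[set s in 'C_K[u] | p^'.-elt s]| * #|P|)%N = #|'C_K[u]|.
Proof.
move=> sylP cycP Ku pu ntu.
have sUK : <[u]> \subset K by rewrite cycle_subG.
have [x Kx sUPx] := Sylow_subJ sylP sUK pu.
have sylPx : p.-Sylow(K) (P :^ x)%G by rewrite pHallJ.
have cycPx : cyclic (P :^ x)%G by rewrite /= cyclicJ.
have Pxu : u \in P :^ x by rewrite (subsetP sUPx) ?cycle_id.
have sPxC : P :^ x \subset 'C_K[u].
  by rewrite subsetI (pHall_sub sylPx) sub_cent1 (subsetP (cyclic_abelian cycPx)).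
have sylPxC : p.-Sylow('C_K[u]) (P :^ x)%G := pHall_subl sPxC (subsetIl _ _) sylPx.
have nPxC : 'N_('C_K[u])(P :^ x) \subset 'C(P :^ x).
  apply/subsetP => y /setIP[/setIP[Ky /cent1P cyu] nPy].
  by apply: norm_cent_cyclic_Sylow sylPx cycPx _ Pxu ntu cyu; rewrite inE Ky.
have := card_p'elt_mul_Sylow sylPxC (cyclic_abelian cycPx) nPxC.
by rewrite cardJg.
Qed.

Lemma card_constt_fiber K u : u \in K -> p.-elt u ->
  #|[set g in K | g.`_p == u]| = #|[set s in 'C_K[u] | p^'.-elt s]|.
Proof.
move=> Ku pu; rewrite -[RHS](card_imset _ (mulgI u)); apply: eq_card => g.
apply/idP/idP; last first.
  case/imsetP=> s /setIdP[/setIP[Ks /cent1P csu] p's] ->.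
  rewrite inE groupM // consttM; last exact: commute_sym.
  by rewrite (constt_p_elt pu) (constt1P p's) mulg1 /=.
rewrite inE => /andP[Kg /eqP gp]; apply/imsetP; exists g.`_p^'; last first.
  by rewrite -gp consttC.
have Kgp' : g.`_p^' \in K by case/cycleP: (cycle_constt p^' g) => i ->; rewrite groupX.
by rewrite inE p_elt_constt andbT inE Kgp' -gp; apply/cent1P/commuteX2.
Qed.

Lemma sum_card_cent1_generators K Q : cyclic Q -> Q \subset K ->
  (\sum_(u | (u \in K) && (#[u] == #|Q|) && (<[u]> == Q)) #|'C_K[u]|)%N
    = (totient #|Q| * #|'C_K(Q)|)%N.
Proof.
move=> cycQ sQK; have [g defQ] := cyclicP cycQ.
rewrite (eq_bigr (fun _ => #|'C_K(Q)|)) => [|u /andP[_ /eqP <-]]; last first.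
  by rewrite cent_cycle.
rewrite sum_nat_const; congr (_ * _)%N.
rewrite defQ -orderE totient_gen; apply: eq_card => u.
rewrite unfold_in /= !inE /generator.
apply/idP/idP => [/andP[_ /eqP <-] // | /eqP defU].
rewrite -defU eqxx andbT !orderE -defU eqxx andbT.
by rewrite (subsetP sQK) // defQ defU cycle_id.
Qed.

Lemma sum_card_cent1_order K P a j : prime p -> p.-Sylow(K) P -> cyclic P ->
  #|P| = (p ^ a)%N -> (0 < j <= a)%N ->
  ((\sum_(u in K | #[u] == p ^ j) #|'C_K[u]|) * #|'N_K(P)|)%N
    = (#|K| * totient (p ^ j) * #|'C_K(P)|)%N.
Proof.
move=> pr_p sylP cycP oP /andP[j_gt0 le_ja].
have [sPK pP] := (pHall_sub sylP, pHall_pgroup sylP).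
have [Q [sQP _ oQ]] : exists Q : {group gT}, [/\ Q \subset P, Q <| P & #|Q| = (p ^ j)%N].
  by apply: normal_pgroup (normal_refl P) _; rewrite // oP pfactorK.
have sQK := subset_trans sQP sPK; have pQ := pgroupS sQP pP.
have ntQ : Q :!=: 1 by rewrite -cardG_gt1 oQ -(expn0 p) ltn_exp2l ?prime_gt1.
have cycle_ccl u : (u \in K) && (#[u] == p ^ j)%N -> <[u]> \in Q :^: K.
  case/andP=> Ku /eqP ou; have sUK : <[u]> \subset K by rewrite cycle_subG.
  have pU : p.-group <[u]> by rewrite /pgroup -orderE ou pnatX pnat_id.
  have [x Kx sUPx] := Sylow_subJ sylP sUK pU.
  suff -> : <[u]> = Q :^ x by apply: imset_f.
  apply/eqP; rewrite (eq_subG_cyclic (G := (P :^ x)%G)) ?cyclicJ ?conjSg //=.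
  by rewrite cardJg oQ -orderE ou.
rewrite (partition_big (fun u => <[u]>) [in Q :^: K] cycle_ccl) /=.
have card_gen R : R \in Q :^: K ->
  (\sum_(u | (u \in K) && (#[u] == p ^ j)%N && (<[u]> == R)) #|'C_K[u]|)%N
    = (totient (p ^ j) * #|'C_K(Q)|)%N.
  case/imsetP=> x Kx ->; have sQxK : Q :^ x \subset K by rewrite -(conjGid Kx) conjSg.
  have cycQx : cyclic (Q :^ x) by rewrite cyclicJ (cyclicS sQP cycP).
  rewrite -oQ -(cardJg Q x) sum_card_cent1_generators // cardJg.
  by rewrite centJ -{1}(conjGid Kx) -conjIg cardJg.
rewrite (eq_bigr _ card_gen) sum_nat_const card_conjugates.
have := card_norm_cent_cyclic_Sylow_sub sylP cycP sQP ntQ.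
rewrite -(Lagrange (subsetIl K 'N(Q))) => eq_card_NC.
transitivity (#|K : 'N_K(Q)| * totient (p ^ j) * (#|'N_K(Q)| * #|'C_K(P)|))%N.
  by rewrite eq_card_NC; ring.
by rewrite /=; ring.
Qed.

End CyclicSylow.

Local Open Scope ring_scope.

Definition logn_weight (p j : nat) : rat :=
  j%:R + (if (0 < j)%N then (p%:R - 1)^-1 else 0).

Lemma logn_weight0 p : logn_weight p 0 = 0.
Proof. by rewrite /logn_weight addr0. Qed.

Lemma sum_logn_weight_totient p a : prime p ->
  \sum_(j < a.+1) logn_weight p j * (totient (p ^ j))%:R = a%:R * (p ^ a)%:R.
Proof.
move=> pr_p; have p_gt1 := prime_gt1 pr_p.
have p1_neq0 : (p%:R - 1 : rat) != 0 by rewrite subr_eq0 pnatr_eq1 gtn_eqF.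
elim: a => [|a IHa]; first by rewrite big_ord1 logn_weight0 !mul0r.
rewrite big_ord_recr /= IHa totient_pfactor // /logn_weight /=.
rewrite expnS !natrM -subn1 natrB 1?ltnW // -natr1.
by field.
Qed.

Section ClassSums.
Local Open Scope group_scope.
Variables (gT : finGroupType) (p : nat).
Implicit Types (H K P : {group gT}).

Lemma sum_by_p_part K (F : nat -> rat) :
  (\sum_(g in K) F (logn p #[g])
    = \sum_(u in K | p.-elt u) F (logn p #[u]) * #|[set s in 'C_K[u] | p^'.-elt s]|%:R)%R.
Proof.
rewrite (eq_bigr (fun g => F (logn p #[g.`_p]%g))); last first.
  by move=> g _; rewrite order_constt logn_part.
rewrite (partition_big (fun g => g.`_p)%g (fun u => (u \in K) && p.-elt u)) /=; last first.
  move=> g Kg; rewrite p_elt_constt andbT.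
  by case/cycleP: (cycle_constt p g) => i ->; rewrite groupX.
apply: eq_bigr => u /andP[Ku pu].
rewrite -card_constt_fiber // (eq_bigr (fun _ => F (logn p #[u]%g))); last first.
  by move=> g /andP[_ /eqP ->].
rewrite sumr_const -[LHS]mulr_natr; congr (_ * _%:R)%R.
by apply: eq_card => g; rewrite inE.
Qed.

Lemma sum_p_elt_by_order K a (F : nat -> rat) (c : gT -> nat) :
  prime p -> (logn p #|K| <= a)%N ->
  (\sum_(u in K | p.-elt u) F (logn p #[u]) * (c u)%:R
    = \sum_(j < a.+1) F j * (\sum_(u in K | #[u] == p ^ j) c u)%N%:R)%R.
Proof.
move=> pr_p le_Ka; have le_logn u : u \in K -> (logn p #[u] < a.+1)%N.
  by move=> Ku; rewrite ltnS (leq_trans _ le_Ka) ?dvdn_leq_log ?cardG_gt0 ?order_dvdG.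
rewrite (partition_big (fun u => (inord (logn p #[u]) : 'I_a.+1)) predT) //=.
apply: eq_bigr => j _; rewrite natr_sum mulr_sumr.
apply: eq_big => [u | u]; last first.
  by case/andP=> /andP[Ku _] /eqP <-; rewrite /= inordK ?le_logn.
case Ku : (u \in K) => //=; rewrite -(inj_eq val_inj) /= inordK ?le_logn //.
apply/andP/eqP => [[pu /eqP <-] | ou]; first by rewrite -p_part part_pnat_id.
by rewrite /p_elt ou pnatX pnat_id // pfactorK.
Qed.

Lemma sum_logn_weight_cyclic_Sylow K P a : prime p -> p.-Sylow(K) P -> cyclic P ->
  #|P| = (p ^ a)%N ->
  ((\sum_(g in K) logn_weight p (logn p #[g])) * #|'N_K(P)|%:R
    = #|K|%:R * a%:R * #|'C_K(P)|%:R)%R.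
Proof.
move=> pr_p sylP cycP oP.
have lognK : logn p #|K| = a.
  by rewrite -(pfactorK a pr_p) -oP (card_Hall sylP) p_part pfactorK.
have pa_neq0 : ((p ^ a)%:R : rat) != 0%R by rewrite pnatr_eq0 -lt0n expn_gt0 prime_gt0.
have scale_fiber u : u \in K -> p.-elt u ->
    (logn_weight p (logn p #[u]) * #|[set s in 'C_K[u] | p^'.-elt s]|%:R * (p ^ a)%:R
      = logn_weight p (logn p #[u]) * #|'C_K[u]|%:R)%R.
  move=> Ku pu; have [-> | ntu] := eqVneq u 1; first by rewrite order1 logn1 logn_weight0 !mul0r.
  by rewrite -mulrA -natrM -oP card_p'elt_cent1_cyclic_Sylow.
apply: (mulIf pa_neq0); rewrite sum_by_p_part mulrAC mulr_suml.
rewrite (eq_bigr (fun u => logn_weight p (logn p #[u]) * #|'C_K[u]|%:R)%R); last first.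
  by move=> u /andP[]; apply: scale_fiber.
rewrite (sum_p_elt_by_order (a := a) _ _ pr_p) ?lognK // mulr_suml.
rewrite (eq_bigr (fun j : 'I_a.+1 =>
    (#|K| * #|'C_K(P)|)%N%:R * (logn_weight p j * (totient (p ^ j))%:R))%R); last first.
  move=> j _; have [-> | j_gt0] := posnP j; first by rewrite logn_weight0 !(mul0r, mulr0).
  have j_le_a : (0 < j <= a)%N by rewrite j_gt0 -ltnS ltn_ord.
  rewrite -mulrA -natrM (sum_card_cent1_order pr_p sylP cycP oP j_le_a).
  by rewrite !natrM; ring.
by rewrite -mulr_sumr sum_logn_weight_totient // !natrM; ring.
Qed.

Lemma sum_logn_weight_cyclic H : prime p -> cyclic H ->
  (\sum_(z in H) logn_weight p (logn p #[z]) = #|H|%:R * (logn p #|H|)%:R)%R.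
Proof.
move=> pr_p cycH; have [P sylP] := Sylow_exists p H.
have sPH := pHall_sub sylP; have cycP := cyclicS sPH cycH.
have oP : #|P| = (p ^ logn p #|H|)%N by rewrite (card_Hall sylP) p_part.
have cPH : H \subset 'C(P) by rewrite centsC (subset_trans sPH (cyclic_abelian cycH)).
have := sum_logn_weight_cyclic_Sylow pr_p sylP cycP oP.
rewrite (setIidPl (subset_trans cPH (cent_sub P))) (setIidPl cPH).
by apply: mulIf; rewrite pnatr_eq0 -lt0n cardG_gt0.
Qed.

End ClassSums.

Lemma vp_rat_invn p n : (0 < n)%N -> vp_rat p (n%:R)^-1 = - (logn p n)%:Z.
Proof.
move=> n_gt0; have -> : (n%:R : rat)^-1 = 1%:~R / (n%:Z)%:~R by rewrite pmulrn mul1r.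
rewrite /vp_rat coprimeq_num ?coprimeq_den ?coprime1n //=.
have -> : (n%:Z == 0) = false by apply/negbTE; rewrite -lt0n.
by rewrite mulr1 gtr0_sg ?ltz_nat //= logn1 sub0r.
Qed.

Lemma sum_cfInd1 (gT : finGroupType) (G H : {group gT}) (F : gT -> algC) :
  (H \subset G)%g -> (forall x y, F (x ^ y)%g = F x) ->
  \sum_(x in G) F x * 'Ind[G, H] 1 x = #|G|%:R * #|H|%:R^-1 * \sum_(z in H) F z.
Proof.
move=> sHG FJ.
rewrite (eq_bigr (fun x =>
    #|H|%:R^-1 * \sum_(y in G) F (x ^ y)%g * ((x ^ y)%g \in H)%:R)); last first.
  move=> x _; rewrite cfIndE // mulrCA mulr_sumr; congr (_ * _).
  by apply: eq_bigr => y _; rewrite cfun1E FJ.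
rewrite -mulr_sumr exchange_big /=.
rewrite (eq_bigr (fun _ => \sum_(z in G) F z * (z \in H)%:R)); last first.
  move=> y Gy; rewrite (reindex_inj (conjg_inj (y^-1)%g)) /=.
  apply: eq_big => [z | z _]; last by rewrite conjgKV.
  by rewrite groupJr ?groupV.
rewrite sumr_const (big_setID H) /= (setIidPr sHG).
rewrite [X in _ + X]big1 ?addr0; last by move=> z /setDP[_ /negbTE ->]; rewrite mulr0.
rewrite (eq_bigr F); last by move=> z ->; rewrite mulr1.
by rewrite mulrnAr -[LHS]mulr_natl mulrA.
Qed.

Lemma sum_artin_coeffs (gT : finGroupType) (G : {group gT}) (reps : seq {group gT})
    (alpha : {group gT} -> rat) (F : gT -> rat) :
  {in reps, forall H : {group gT}, H \subset G}%g -> artin_coeffs G reps alpha ->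
  (forall x y, F (x ^ y)%g = F x) ->
  \sum_(x in G) F x
    = #|G|%:R * \sum_(H <- reps) alpha H * (#|H|%:R^-1 * \sum_(z in H) F z).
Proof.
move=> sHG artin FJ; apply: (fmorph_inj (ratr : rat -> algC)).
rewrite rmorph_sum rmorphM rmorph_nat rmorph_sum mulr_sumr.
rewrite (eq_bigr (fun x => \sum_(H <- reps)
    ratr (F x) * (ratr (alpha H) *: 'Ind[G, H] (1 : 'CF(H))) x)); last first.
  by move=> x Gx; rewrite -mulr_sumr -sum_cfunE -artin cfun1E Gx mulr1.
rewrite exchange_big /=; apply: eq_big_seq => H repsH.
under eq_bigr do rewrite cfunE mulrCA.
rewrite -mulr_sumr (sum_cfInd1 (sHG H repsH)); last by move=> x y; rewrite FJ.
by rewrite !rmorphM fmorphV rmorph_nat rmorph_sum; ring.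
Qed.

Lemma vp_regconst_artin_relation (gT : finGroupType) p (G : {group gT})
    (reps : seq {group gT}) (alpha : {group gT} -> rat) :
  vp_regconst_trivial p (artin_relation G reps alpha)
    = - (logn p #|G|)%:R + \sum_(H <- reps) alpha H * (logn p #|H|)%:R.
Proof.
rewrite /vp_regconst_trivial /artin_relation big_cons big_map /= /reg_det_trivial.
rewrite vp_rat_invn ?cardG_gt0 // mul1r intrN pmulrn; congr (_ + _).
by apply: eq_bigr => H _; rewrite vp_rat_invn ?cardG_gt0 // intrN pmulrn mulrNN.
Qed.

Lemma sum_artin_logn_cyclic_Sylow (gT : finGroupType) p (G P : {group gT})
    (reps : seq {group gT}) (alpha : {group gT} -> rat) :
  prime p -> cyclic_class_reps G reps -> artin_coeffs G reps alpha ->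
  (p.-Sylow(G) P)%g -> cyclic P ->
  (\sum_(H <- reps) alpha H * (logn p #|H|)%:R) * #|'N_G(P)%g|%:R
    = (logn p #|G|)%:R * #|'C_G(P)%g|%:R.
Proof.
move=> pr_p [reps_cyclic _] artin sylP cycP.
have sHG : {in reps, forall H : {group gT}, H \subset G}%g.
  by move=> H /reps_cyclic/andP[].
have G_neq0 : (#|G|%:R : rat) != 0 by rewrite pnatr_eq0 -lt0n cardG_gt0.
have oP : #|P| = (p ^ logn p #|G|)%N by rewrite (card_Hall sylP) p_part.
have := sum_logn_weight_cyclic_Sylow pr_p sylP cycP oP.
rewrite (sum_artin_coeffs sHG artin) => [|x y]; last by rewrite orderJ.
under eq_big_seq => H /reps_cyclic/andP[_ cycH] do
  rewrite sum_logn_weight_cyclic // mulKf ?pnatr_eq0 -?lt0n ?cardG_gt0 //.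
by rewrite -mulrA -[RHS]mulrA => /(mulfI G_neq0).
Qed.

Theorem corollary5p11 (gT : finGroupType) (G : {group gT}) (p r : nat)
    (reps : seq {group gT}) (alpha : {group gT} -> rat) :
  prime p ->
  (forall P : {group gT}, (p.-Sylow(G) P)%g -> cyclic P /\ #|P| = (p ^ r)%N) ->
  cyclic_class_reps G reps ->
  artin_coeffs G reps alpha ->
  ((0 < r)%N ->
     forall Q : {group gT}, Q \subset G -> (p.-group Q)%g -> Q :!=: 1%g ->
       vp_regconst_trivial p (artin_relation G reps alpha)
       = - (r%:R) * (1 - (#|('C_G(Q))%g|%:R / #|('N_G(Q))%g|%:R)))
  /\
  (r = 0%N -> vp_regconst_trivial p (artin_relation G reps alpha) = 0).
Proof.
move=> pr_p Sylow_cyclic reps_ok artin.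
have [P sylP] := Sylow_exists p G; have [cycP oP] := Sylow_cyclic P sylP.
have lognG : logn p #|G| = r.
  by rewrite -(pfactorK r pr_p) -oP (card_Hall sylP) p_part pfactorK.
have := sum_artin_logn_cyclic_Sylow pr_p reps_ok artin sylP cycP.
rewrite vp_regconst_artin_relation lognG; set S := \sum_(H <- reps) _ => S_NP.
have card_neq0 (A : {group gT}) : (#|A|%:R : rat) != 0.
  by rewrite pnatr_eq0 -lt0n cardG_gt0.
split=> [r_gt0 Q sQG pQ ntQ | r0]; last first.
  move: S_NP; rewrite r0 mul0r => /eqP; rewrite mulf_eq0 (negbTE (card_neq0 _)) orbF.
  by move=> /eqP ->; rewrite addr0 mulr0n oppr0.
have := card_norm_cent_cyclic_Sylow sylP cycP sQG pQ ntQ.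
move/(congr1 (fun n => n%:R : rat)); rewrite !natrM => NQ_CP.
apply: (mulIf (card_neq0 'N_G(P)%G)); rewrite mulrDl S_NP /=.
have -> : #|'C_G(P)%g|%:R = #|'N_G(P)%g|%:R * #|'C_G(Q)%g|%:R / #|'N_G(Q)%g|%:R :> rat.
  by rewrite -NQ_CP mulrC mulKf.
by field; apply: card_neq0 'N_G(Q)%G.
Qed.
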